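(* There is no functional $M$ of type $3$ with $\mathsf{PR}(M)$ which is Kleene-computable (via the schemes S1–S9) in some functional $H$ of type $2$.
   Context: $C=2^{\mathbb N}$ is Cantor space. For $f\in C$ and $n\in\mathbb N$, $\overline{f}n=\langle f(0),\dots,f(n-1)\rangle$, and for a finite binary sequence $\sigma$, $[\sigma]$ is the set of $g\in C$ extending $\sigma$. For $F,G:C\to\mathbb N$, $\mathsf{LOC}(F,G)$ means $(\forall f,g\in C)\big(g\in[\overline{f}G(f)]\to F(g)\le G(f)\big)$ ($G$ is a realiser for local boundedness of $F$). For a functional $M$ mapping functionals $G:C\to\mathbb N$ to natural numbers, $\mathsf{PR}(M)$ means $(\forall F,G:C\to\mathbb N)\big(\mathsf{LOC}(F,G)\to(\forall g\in C)(F(g)\le M(G))\big)$; such $M$ is called a Pincherle realiser (PR). Computability is Kleene's higher-order computability given by the schemes S1–S9. *)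

From mathcomp Require Import all_boot.
Set Implicit Arguments.
Unset Strict Implicit.
Unset Printing Implicit Defensive.

(* obj 0 = nat, obj (n+1) = obj n -> nat : total functionals of pure type n. *)
Fixpoint obj (n : nat) : Type :=
  match n with 0 => nat | n'.+1 => obj n' -> nat end.

Definition arg := {n : nat & obj n}.
Definition argN (x : nat) : arg := existT obj 0 x.

Definition idx (e : nat) : seq nat := CodeSeq.decode e.

(** * Kleene's schemes S1-S9:  kleene e args a  means  {e}(args) = a. *)
Inductive kleene : nat -> seq arg -> nat -> Prop :=
| S1 e x rest : idx e = [:: 1] ->
    kleene e (argN x :: rest) x.+1
| S2 e q args : idx e = [:: 2; q] ->
    kleene e args q
| S3 e x rest : idx e = [:: 3] ->
    kleene e (argN x :: rest) x
| S4 e e1 e2 args a b : idx e = [:: 4; e1; e2] ->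
    kleene e2 args a -> kleene e1 (argN a :: args) b ->
    kleene e args b
| S5_0 e e1 e2 rest b : idx e = [:: 5; e1; e2] ->
    kleene e1 rest b -> kleene e (argN 0 :: rest) b
| S5_S e e1 e2 x rest a b : idx e = [:: 5; e1; e2] ->
    kleene e (argN x :: rest) a ->
    kleene e2 (argN a :: argN x :: rest) b ->
    kleene e (argN x.+1 :: rest) b
| S6 e e1 p args a : idx e = 6 :: e1 :: p ->
    perm_eq p (iota 0 (size args)) ->
    kleene e1 [seq nth (argN 0) args i | i <- p] a ->
    kleene e args a
| S7 e (f : obj 1) x rest : idx e = [:: 7] ->
    kleene e (existT obj 1 f :: argN x :: rest) (f x)
| S8 e d k (F : obj k.+2) rest (g : obj k -> nat) : idx e = [:: 8; d] ->
    (forall xi : obj k,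
        kleene d (existT obj k xi :: existT obj k.+2 F :: rest) (g xi)) ->
    kleene e (existT obj k.+2 F :: rest) (F g)
| S9 e m e' rest a : idx e = [:: 9; m] ->
    kleene e' (take m rest) a ->
    kleene e (argN e' :: rest) a.

Definition computable_in (M : obj 3) (H : obj 2) : Prop :=
  exists e : nat, forall G : obj 2,
    kleene e [:: existT obj 2 G; existT obj 2 H] (M G).

Definition inC (f : nat -> nat) : Prop := forall n, f n <= 1.

Definition in_cyl (f : nat -> nat) (n : nat) (g : nat -> nat) : Prop :=
  forall i, i < n -> g i = f i.

(* LOC(F,G) for F G : C -> N (represented by type-2 functionals,
   only their values on C matter). *)
Definition LOC (F G : obj 2) : Prop :=
  forall f g : nat -> nat, inC f -> inC g -> in_cyl f (G f) g -> F g <= G f.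

Definition PR (M : obj 3) : Prop :=
  forall F G : obj 2, LOC F G -> forall g : nat -> nat, inC g -> F g <= M G.

From mathcomp Require Import all_boot.
From HB Require Import structures.
From mathcomp Require Import classical_sets boolp.
From Stdlib Require Import Eqdep_dec.

Set Implicit Arguments.
Unset Strict Implicit.
Unset Printing Implicit Defensive.

(* By Zorn's lemma there is a maximal partial type-2 functional R such
   that every g in its domain is computed (relative to R and H, with the S8
   calls on the unknown argument answered by R) by some index j, and R g
   exceeds j + 1.  Maximality makes the domain of R contain every function so
   computed, and relative computations are deterministic; hence for every
   total G extending R, a computation {e}(G, H) is a computation relative to R
   and H, and M G is the same for all such G.  A diagonal z in Cantor space
   differs at j + 1 from the function computed by j, so z lies in no
   neighbourhood [\overline{g}(R g)] with g in the domain of R.  Therefore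
   the extension G_k of R by the constant k realises local boundedness of the
   functional equal to k at z and 0 elsewhere, and PR forces M G_k >= k for
   every k. *)

(* Arguments of a computation from (G, H) with the type-2 argument G kept
   symbolic. *)
Inductive slot := Num of nat | Gvar | Hvar.

Definition sum_of_slot (s : slot) : nat + bool :=
  match s with Num n => inl n | Gvar => inr true | Hvar => inr false end.

Definition slot_of_sum (u : nat + bool) : slot :=
  match u with inl n => Num n | inr true => Gvar | inr false => Hvar end.

Lemma sum_of_slotK : cancel sum_of_slot slot_of_sum. Proof. by case. Qed.

HB.instance Definition _ := Countable.copy slot (can_type sum_of_slotK).

Definition functional (R : (nat -> nat) -> nat -> Prop) : Prop :=
  forall g v v', R g v -> R g v' -> v = v'.

Section PartialKleene.
Variables (R : (nat -> nat) -> nat -> Prop) (H : obj 2).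

(* Scheme S7 has no counterpart since no argument is of type 1. *)
Inductive pkleene : nat -> seq slot -> nat -> Prop :=
| P1 e x rest : idx e = [:: 1] -> pkleene e (Num x :: rest) x.+1
| P2 e q args : idx e = [:: 2; q] -> pkleene e args q
| P3 e x rest : idx e = [:: 3] -> pkleene e (Num x :: rest) x
| P4 e e1 e2 args a b : idx e = [:: 4; e1; e2] ->
    pkleene e2 args a -> pkleene e1 (Num a :: args) b -> pkleene e args b
| P5_0 e e1 e2 rest b : idx e = [:: 5; e1; e2] ->
    pkleene e1 rest b -> pkleene e (Num 0 :: rest) b
| P5_S e e1 e2 x rest a b : idx e = [:: 5; e1; e2] ->
    pkleene e (Num x :: rest) a -> pkleene e2 (Num a :: Num x :: rest) b ->
    pkleene e (Num x.+1 :: rest) b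
| P6 e e1 p args a : idx e = 6 :: e1 :: p ->
    perm_eq p (iota 0 (size args)) ->
    pkleene e1 [seq nth (Num 0) args i | i <- p] a -> pkleene e args a
| P8G e d rest (g : nat -> nat) v : idx e = [:: 8; d] ->
    (forall xi, pkleene d (Num xi :: Gvar :: rest) (g xi)) -> R g v ->
    pkleene e (Gvar :: rest) v
| P8H e d rest (g : nat -> nat) : idx e = [:: 8; d] ->
    (forall xi, pkleene d (Num xi :: Hvar :: rest) (g xi)) ->
    pkleene e (Hvar :: rest) (H g)
| P9 e m e' rest a : idx e = [:: 9; m] ->
    pkleene e' (take m rest) a -> pkleene e (Num e' :: rest) a.

Definition computes (d : nat) (rest : seq slot) (g : nat -> nat) : Prop :=
  forall xi, pkleene d (Num xi :: Gvar :: rest) (g xi).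

Hypothesis R_functional : functional R.

Lemma pkleene_det e s a b : pkleene e s a -> pkleene e s b -> a = b.
Proof.
move=> h; elim: h b => {e s a}
  [e x rest he| e q args he| e x rest he| e e1 e2 args a b he _ IH2 _ IH1
  | e e1 e2 rest b he _ IH| e e1 e2 x rest a b he _ IHa _ IHb
  | e e1 p args a he _ _ IH| e d rest g v he _ IH Rgv| e d rest g he _ IH
  | e m e' rest a he _ IH] c hc; inversion hc; subst; try congruence;
  match goal with h1 : idx ?x = _, h2 : idx ?x = _ |- _ =>
    rewrite h1 in h2; case: h2 => *; subst end.
- by have ? := IH2 _ ltac:(eassumption); subst; apply: IH1.
- exact: IH.
- by have ? := IHa _ ltac:(eassumption); subst; apply: IHb.
- exact: IH.
- match goal with hg : R ?g' c |- _ =>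
    suff eg : g = g' by apply: R_functional Rgv _; rewrite eg end.
  by apply: funext => xi; apply: IH; eauto.
- congr H; apply: funext => xi; apply: IH; eauto.
- exact: IH.
Qed.

Lemma computes_unique d rest g g' : computes d rest g -> computes d rest g' -> g = g'.
Proof. by move=> hg hg'; apply: funext => xi; apply: pkleene_det (hg xi) (hg' xi). Qed.

End PartialKleene.

Lemma pkleene_mono (R R' : (nat -> nat) -> nat -> Prop) H :
  (forall g v, R g v -> R' g v) ->
  forall e s a, pkleene R H e s a -> pkleene R' H e s a.
Proof.
move=> RR' e s a; elim=> {e s a}.
- by move=> *; apply: P1.
- by move=> *; apply: P2.
- by move=> *; apply: P3.
- by move=> e e1 e2 args a b he _ h2 _ h1; apply: P4 he h2 h1.
- by move=> e e1 e2 rest b he _ h; apply: P5_0 he h.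
- by move=> e e1 e2 x rest a b he _ ha _ hb; apply: P5_S he ha hb.
- by move=> e e1 p args a he pp _ h; apply: P6 he pp h.
- by move=> e d rest g v he _ hg Rgv; apply: P8G he hg (RR' _ _ Rgv).
- by move=> e d rest g he _ hg; apply: P8H he hg.
- by move=> e m e' rest a he _ h; apply: P9 he h.
Qed.

Lemma computes_mono (R R' : (nat -> nat) -> nat -> Prop) H d rest g :
  (forall g v, R g v -> R' g v) -> computes R H d rest g -> computes R' H d rest g.
Proof. by move=> RR' hg xi; apply: pkleene_mono (hg xi). Qed.

Definition coded (R : (nat -> nat) -> nat -> Prop) (H : obj 2) : Prop :=
  forall g v, R g v -> exists d rest, v = (pickle (d, rest)).+2 /\ computes R H d rest g.

Definition computation_closed (R : (nat -> nat) -> nat -> Prop) (H : obj 2) : Prop :=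
  forall d rest g, computes R H d rest g -> exists v, R g v.

Lemma existT_obj_inj n (x y : obj n) : existT obj n x = existT obj n y -> x = y.
Proof. exact: (inj_pair2_eq_dec nat (@eq_comparable nat)). Qed.

Definition slot_val (G H : obj 2) (s : slot) : arg :=
  match s with
  | Num n => argN n
  | Gvar => existT obj 2 G
  | Hvar => existT obj 2 H
  end.

Section Transfer.
Variables (R : (nat -> nat) -> nat -> Prop) (G H : obj 2).
Hypothesis G_extends : forall g v, R g v -> G g = v.
Hypothesis R_closed : computation_closed R H.

Lemma slot_val_type s : projT1 (slot_val G H s) = if s is Num _ then 0 else 2.
Proof. by case: s. Qed.

Lemma slot_valN s x : argN x = slot_val G H s -> s = Num x.
Proof.
by case: s => [n|//|//] /= /existT_obj_inj ->.
Qed.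

Lemma kleene_pkleene e args a : kleene e args a ->
  forall ss, args = map (slot_val G H) ss -> pkleene R H e ss a.
Proof.
elim=> {e args a}.
- move=> e x rest he [|s ss] //= [/slot_valN -> _]; exact: P1.
- move=> e q args he ss _; exact: P2.
- move=> e x rest he [|s ss] //= [/slot_valN -> _]; exact: P3.
- move=> e e1 e2 args a b he _ IH2 _ IH1 ss E.
  by apply: P4 he (IH2 _ E) (IH1 (Num a :: ss) _); rewrite E.
- move=> e e1 e2 rest b he _ IH [|s ss] //= [/slot_valN -> E].
  exact: P5_0 he (IH _ E).
- move=> e e1 e2 x rest a b he _ IHa _ IHb [|s ss] //= [/slot_valN -> E].
  by apply: P5_S he (IHa (Num x :: ss) _) (IHb (Num a :: Num x :: ss) _); rewrite E.
- move=> e e1 p args a he pp _ IH ss E.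
  rewrite E size_map in pp; apply: P6 he (pp) (IH _ _).
  rewrite E -map_comp; apply/eq_in_map => i ip /=.
  by rewrite (nth_map (Num 0)) //; move: ip; rewrite (perm_mem pp) mem_iota.
- move=> e f x rest he [|s ss] //= [/(f_equal (@projT1 _ _))].
  by rewrite slot_val_type; case: s.
- move=> e d k F rest g he _ IH [|s ss] //= [h E].
  have := f_equal (@projT1 _ _) h; rewrite slot_val_type.
  case: s h => [//|h _|h _]; move: F g IH h; case: k => // F g IH h;
    move/existT_obj_inj: h => ?; subst F.
  + have hg : computes R H d ss g by move=> xi; apply: IH; rewrite E.
    have [v Rgv] := R_closed hg.
    by rewrite (G_extends Rgv); apply: P8G he hg Rgv.
  + by apply: P8H he _ => xi; apply: IH; rewrite E.
- move=> e m e' rest a he _ IH [|s ss] //= [/slot_valN -> E].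
  by apply: P9 he (IH _ _); rewrite E map_take.
Qed.

End Transfer.

Section MaximalGraph.
Local Open Scope classical_set_scope.
Variable H : obj 2.

Let rel_of (S : set ((nat -> nat) * nat)) g v := S (g, v).

Definition consistent (S : set ((nat -> nat) * nat)) : Prop :=
  functional (rel_of S) /\ coded (rel_of S) H.

Lemma consistent_bigcup (F : set (set ((nat -> nat) * nat))) :
  F `<=` consistent -> total_on F subset -> consistent (\bigcup_(X in F) X).
Proof.
move=> FC Ftot; split.
- move=> g v v' [X FX Xv] [Y FY Yv'].
  case: (Ftot X Y FX FY) => [XY|YX].
  + exact: (FC Y FY).1 (XY _ Xv) Yv'.
  + exact: (FC X FX).1 Xv (YX _ Yv').
- move=> g v [X FX Xv].
  have [d [rest [-> hg]]] := (FC X FX).2 g v Xv.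
  exists d, rest; split=> //; apply: computes_mono hg => g' v' Xv'.
  by exists X.
Qed.

Lemma consistent_setU1 S d rest g : consistent S -> computes (rel_of S) H d rest g ->
  ~ (exists v, S (g, v)) -> consistent (S `|` [set (g, (pickle (d, rest)).+2)]).
Proof.
move=> [Sfun Scoded] hg gS; split.
- move=> g' v v' [Sv|[eg ev]] [Sv'|[eg' ev']]; subst=> //.
  + exact: Sfun Sv Sv'.
  + by exfalso; apply: gS; exists v.
  + by exfalso; apply: gS; exists v'.
- move=> g' v [Sv|[eg ev]]; subst.
  + have [d' [rest' [-> hg']]] := Scoded g' v Sv.
    by exists d', rest'; split=> //; apply: computes_mono hg' => ? ? ?; left.
  + by exists d, rest; split=> //; apply: computes_mono hg => ? ? ?; left.
Qed.

Lemma exists_coded_closed_graph :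
  exists R, [/\ functional R, coded R H & computation_closed R H].
Proof.
have [S [[Sfun Scoded] Smax]] := Zorn_bigcup consistent_bigcup.
exists (rel_of S); split=> // d rest g hg.
apply: contrapT => gS.
apply: Smax (consistent_setU1 (conj Sfun Scoded) hg gS).
split=> [p Sp|SU]; first by left.
by apply: gS; exists (pickle (d, rest)).+2; apply: SU; right.
Qed.

End MaximalGraph.

Section Diagonal.
Variables (R : (nat -> nat) -> nat -> Prop) (H : obj 2).
Hypotheses (R_functional : functional R) (R_coded : coded R H).

Definition diag (n : nat) : nat :=
  if n is j.+1 then
    if @unpickle (nat * seq slot)%type j is Some (d, rest)
    then nat_of_bool (xget (fun=> 0) (computes R H d rest) n == 0)
    else 0
  else 0.

Lemma diag_inC : inC diag.
Proof. by case=> [|n] //=; case: unpickle => [[d rest]|] //; apply: leq_b1. Qed.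

Lemma diag_notin_cyl g v : R g v -> inC g -> ~ in_cyl g v diag.
Proof.
move=> Rgv gC; have [d [rest [-> hg]]] := R_coded Rgv.
set j := pickle (d, rest) => cyl.
have diag_j : diag j.+1 = nat_of_bool (g j.+1 == 0).
  rewrite /diag pickleK.
  by rewrite (computes_unique R_functional (xgetPex (fun=> 0) (ex_intro _ g hg)) hg).
have := cyl j.+1 (ltnSn _); rewrite diag_j.
by have := gC j.+1; case: (g j.+1) => [|[|]].
Qed.

Definition graph_ext (k : nat) : obj 2 := fun f =>
  if pselect (exists v, R f v) is left h then sval (cid h) else k.

Lemma graph_ext_extends k g v : R g v -> graph_ext k g = v.
Proof.
move=> Rgv; rewrite /graph_ext; case: pselect => [h|[]]; last by exists v.
exact: R_functional (svalP (cid h)) Rgv.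
Qed.

Definition diag_spike (k : nat) : obj 2 := fun f => if pselect (f = diag) then k else 0.

Lemma LOC_diag_spike k : LOC (diag_spike k) (graph_ext k).
Proof.
move=> f g fC _ cyl; rewrite /diag_spike; case: pselect => [gz|_] //=.
move: cyl; rewrite gz /graph_ext; case: pselect => [h|_] //.
case: (cid h) => v /= Rfv cyl.
by case: (diag_notin_cyl Rfv fC cyl).
Qed.

Lemma PR_graph_ext M k : PR M -> k <= M (graph_ext k).
Proof.
move=> MPR; have := MPR _ _ (@LOC_diag_spike k) _ diag_inC.
by rewrite /diag_spike; case: pselect.
Qed.

End Diagonal.

Theorem theorem3p1 :
  forall (M : obj 3), PR M -> forall H : obj 2, ~ computable_in M H.
Proof.
move=> M MPR H [e He].
have [R [Rfun Rcoded Rclosed]] := exists_coded_closed_graph H.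
have run k : pkleene R H e [:: Gvar; Hvar] (M (graph_ext R k)).
  exact: (kleene_pkleene (graph_ext_extends Rfun k) Rclosed (He _) (ss := [:: Gvar; Hvar]) erefl).
have := PR_graph_ext Rfun Rcoded (M (graph_ext R 0)).+1 MPR.
by rewrite (pkleene_det Rfun (run _) (run 0)) ltnn.
Qed.
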